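(* Let $r:\tilde Q\to\mathbb R$ be a function such that equation (E-IV)(a) holds at every $(K,L,M)\in\tilde Q$ with $K+M<0$ and $L+M<0$. If $r>0$ at all points of $\tilde Q$ lying in the plane $K+M=0$ or in the plane $L+M=0$, then $r>0$ on all of $\tilde Q$.
   Context: $\tilde Q=\{(K,L,M)\in\mathbb Z^3: L+M\le0,\ K+M\le0,\ K+L\ge0\}$. Fix $\alpha_1,\alpha_2,\alpha_3>0$ with $\alpha_1+\alpha_2+\alpha_3=\pi$. Equation (E-IV)(a) at $(K,L,M)$: with $r=r(K,L,M)$, $r_1=r(K,L+1,M)$, $r_2=r(K,L,M+1)$, $r_3=r(K+1,L,M)$, $r(r_1\sin\alpha_3+r_2\sin\alpha_1+r_3\sin\alpha_2)=r_1r_2\sin\alpha_2+r_2r_3\sin\alpha_3+r_3r_1\sin\alpha_1$. *)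

From Stdlib Require Import Reals ZArith.
Open Scope R_scope.

Definition inQt (K L M : Z) : Prop :=
  (L + M <= 0)%Z /\ (K + M <= 0)%Z /\ (0 <= K + L)%Z.

Definition EIVa (a1 a2 a3 : R) (r : Z -> Z -> Z -> R) (K L M : Z) : Prop :=
  let r0 := r K L M in
  let r1 := r K (L + 1)%Z M in
  let r2 := r K L (M + 1)%Z in
  let r3 := r (K + 1)%Z L M in
  r0 * (r1 * sin a3 + r2 * sin a1 + r3 * sin a2)
  = r1 * r2 * sin a2 + r2 * r3 * sin a3 + r3 * r1 * sin a1.

(* The three neighbours (K,L+1,M), (K,L,M+1), (K+1,L,M) of an interior point
   are closer to the boundary planes, measured by -(K+M)-(L+M).  Since all
   sines are positive, (E-IV)(a) expresses r(K,L,M) as a quotient of two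
   positive expressions in the neighbouring values, so positivity propagates
   inward from the boundary. *)

From Stdlib Require Import Reals ZArith Lia Lra Psatz.
Open Scope R_scope.

Lemma sin_pos_of_triangle_angle (a b c : R) :
  0 < a -> 0 < b -> 0 < c -> a + b + c = PI -> 0 < sin a.
Proof. intros; apply sin_gt_0; lra. Qed.

Lemma pos_of_weighted_mean_eq (s1 s2 s3 r0 x1 x2 x3 : R) :
  0 < s1 -> 0 < s2 -> 0 < s3 -> 0 < x1 -> 0 < x2 -> 0 < x3 ->
  r0 * (x1 * s3 + x2 * s1 + x3 * s2) = x1 * x2 * s2 + x2 * x3 * s3 + x3 * x1 * s1 ->
  0 < r0.
Proof.
  intros Hs1 Hs2 Hs3 Hx1 Hx2 Hx3 E.
  assert (Hden : 0 < x1 * s3 + x2 * s1 + x3 * s2).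
  { assert (0 < x1 * s3) by now apply Rmult_lt_0_compat.
    assert (0 < x2 * s1) by now apply Rmult_lt_0_compat.
    assert (0 < x3 * s2) by now apply Rmult_lt_0_compat.
    lra. }
  assert (Hnum : 0 < x1 * x2 * s2 + x2 * x3 * s3 + x3 * x1 * s1).
  { assert (0 < x1 * x2 * s2) by (repeat apply Rmult_lt_0_compat; assumption).
    assert (0 < x2 * x3 * s3) by (repeat apply Rmult_lt_0_compat; assumption).
    assert (0 < x3 * x1 * s1) by (repeat apply Rmult_lt_0_compat; assumption).
    lra. }
  destruct (Rle_or_lt r0 0) as [Hr | Hr]; [nra | exact Hr].
Qed.

Lemma EIVa_pos (a1 a2 a3 : R) (r : Z -> Z -> Z -> R) (K L M : Z) :
  0 < sin a1 -> 0 < sin a2 -> 0 < sin a3 ->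
  0 < r K (L + 1)%Z M -> 0 < r K L (M + 1)%Z -> 0 < r (K + 1)%Z L M ->
  EIVa a1 a2 a3 r K L M -> 0 < r K L M.
Proof.
  unfold EIVa; intros Hs1 Hs2 Hs3 Hx1 Hx2 Hx3 E.
  exact (pos_of_weighted_mean_eq _ _ _ _ _ _ _ Hs1 Hs2 Hs3 Hx1 Hx2 Hx3 E).
Qed.

Lemma inQt_ind (P : Z -> Z -> Z -> Prop) :
  (forall K L M, inQt K L M -> (K + M = 0)%Z \/ (L + M = 0)%Z -> P K L M) ->
  (forall K L M, inQt K L M -> (K + M < 0)%Z -> (L + M < 0)%Z ->
     P K (L + 1)%Z M -> P K L (M + 1)%Z -> P (K + 1)%Z L M -> P K L M) ->
  forall K L M, inQt K L M -> P K L M.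
Proof.
  intros Hbd Hstep.
  assert (Hdepth : forall (n : nat) K L M, inQt K L M ->
            (- (K + M) - (L + M) <= Z.of_nat n)%Z -> P K L M).
  { unfold inQt in *.
    induction n as [| n IH]; intros K L M HQ Hn.
    - apply Hbd; [assumption | lia].
    - destruct (Z.eq_dec (K + M) 0); [apply Hbd; auto |].
      destruct (Z.eq_dec (L + M) 0); [apply Hbd; auto |].
      apply Hstep; try assumption; try lia; apply IH; lia. }
  intros K L M HQ.
  apply (Hdepth (Z.to_nat (- (K + M) - (L + M)))); [assumption |].
  unfold inQt in HQ; lia.
Qed.

Theorem lemma3 (a1 a2 a3 : R) (r : Z -> Z -> Z -> R)
  (ha1 : 0 < a1) (ha2 : 0 < a2) (ha3 : 0 < a3) (hsum : a1 + a2 + a3 = PI)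
  (hE : forall K L M : Z, inQt K L M -> (K + M < 0)%Z -> (L + M < 0)%Z ->
          EIVa a1 a2 a3 r K L M)
  (hbd : forall K L M : Z, inQt K L M -> (K + M = 0)%Z \/ (L + M = 0)%Z ->
          0 < r K L M) :
  forall K L M : Z, inQt K L M -> 0 < r K L M.
Proof.
  assert (s1 : 0 < sin a1) by (apply (sin_pos_of_triangle_angle a1 a2 a3); lra).
  assert (s2 : 0 < sin a2) by (apply (sin_pos_of_triangle_angle a2 a1 a3); lra).
  assert (s3 : 0 < sin a3) by (apply (sin_pos_of_triangle_angle a3 a1 a2); lra).
  apply inQt_ind; [exact hbd |].
  intros K L M HQ HKM HLM h1 h2 h3.
  exact (EIVa_pos a1 a2 a3 r K L M s1 s2 s3 h1 h2 h3 (hE K L M HQ HKM HLM)).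
Qed.
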